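(* For every integer $k\ge 1$ there exists an odd integer $N\ge 3$ such that the cycle $C_N$ is a strict prime $k$th-power distance graph.
   Context: A graph $G$ is a strict prime $k$th-power distance graph if there is an injective map $L:V(G)\to\mathbb{Z}$ such that for every edge $uv$ of $G$, $|L(u)-L(v)|=p^k$ for some prime $p$ (the prime may depend on the edge). *)

From mathcomp Require Import all_boot all_order all_algebra.
Set Implicit Arguments. Unset Strict Implicit. Unset Printing Implicit Defensive.
Import Order.TTheory GRing.Theory Num.Theory.

Definition strict_prime_kth_power_distance_graph (k : nat) (V : finType)
  (adj : rel V) : Prop :=
  exists L : V -> int, injective L /\
    forall u v : V, adj u v ->
      exists p : nat, prime p /\ (`|L u - L v|%R = Posz (p ^ k)).

Definition cycle_adj (N : nat) : rel 'I_N :=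
  fun i j => (j == i.+1 %% N :> nat) || (i == j.+1 %% N :> nat).

From mathcomp Require Import all_boot all_order all_algebra.
From mathcomp Require Import zify.

Set Implicit Arguments.
Unset Strict Implicit.

(* Walk around C_N as follows: from 0 jump by 2^k, then make a steps of
   3^k upwards and b steps of 5^k back down to 0, where
   a 3^k + 2^k = b 5^k with 0 < b < 3^k; such a, b exist since 3^k and 5^k
   are coprime.  Labels on the two monotone runs cannot collide, because a
   collision would force 3^k to divide a number in ]0, b[.  Reducing the
   defining equation mod 2 gives a = b (mod 2), so N = a + b + 1 is odd. *)

Lemma cycle_prime_power_distance k N (L : nat -> nat) :
    (forall i j, i < N -> j < N -> L i = L j -> i = j) -> L N = L 0 ->
    (forall i, i < N -> exists2 p, prime p &
       L i.+1 = L i + p ^ k \/ L i = L i.+1 + p ^ k) ->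
  strict_prime_kth_power_distance_graph k (@cycle_adj N).
Proof.
move=> L_inj LN0 L_step.
have L_succ i : i < N -> L (i.+1 %% N) = L i.+1.
  move=> iN; case: (ltnP i.+1 N) => [iSN | NiS]; first by rewrite modn_small.
  have -> : i.+1 = N by lia.
  by rewrite modnn LN0.
have dist_succ (i : 'I_N) : exists2 p, prime p &
    `|(Posz (L i) - Posz (L (i.+1 %% N)%N))%R|%R = Posz (p ^ k) /\
    `|(Posz (L (i.+1 %% N)%N) - Posz (L i))%R|%R = Posz (p ^ k).
  rewrite L_succ //; have [p p_pr Lp] := L_step i (ltn_ord i).
  by exists p => //; case: Lp => ->; split; lia.
exists (fun i : 'I_N => Posz (L i)); split.
  by move=> i j [] /L_inj Lij; apply/val_inj/Lij.
move=> u v /orP[] /eqP ->.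
- by have [p p_pr [Lp _]] := dist_succ u; exists p.
- by have [p p_pr [_ Lp]] := dist_succ v; exists p.
Qed.

Lemma coprime_shifted_multiple P Q T : coprime P Q -> 0 < P -> 0 < Q ->
    ~~ (P %| T) -> T <= Q ->
  exists a b, 0 < b < P /\ a * P + T = b * Q.
Proof.
move=> cPQ P_gt0 Q_gt0 nPT TQ.
have [u v Huv _] := egcdnP P Q_gt0.
rewrite gcdnC (eqP cPQ) in Huv.
set b := (T * u) %% P.
have bQT : b * Q = T %[mod P].
  by rewrite /b modnMml -mulnA Huv mulnDr muln1 -modnDml mulnA modnMl add0n.
have b_gt0 : 0 < b.
  rewrite lt0n; apply: contra nPT => /eqP b0.
  by rewrite /dvdn -bQT b0 mul0n mod0n.
have TbQ : T <= b * Q by apply: leq_trans TQ _; rewrite leq_pmull.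
have P_dvd : P %| b * Q - T by rewrite -eqn_mod_dvd // bQT.
exists ((b * Q - T) %/ P), b; split; first by rewrite b_gt0 ltn_pmod.
by rewrite divnK // subnK.
Qed.

Section TwoRunLabelling.

Variables T P Q a b : nat.
Hypotheses (runs_meet : a * P + T = b * Q) (b_gt0 : 0 < b).

Let N := (a + b).+1.

Definition two_run_label (n : nat) : nat :=
  if n == 0 then 0 else if n <= a.+1 then T + n.-1 * P else (N - n) * Q.

Lemma two_run_label_N : two_run_label N = 0.
Proof. by rewrite /two_run_label /N /= ifN ?subnn //; lia. Qed.

Lemma two_run_label_step i : i < N ->
  [\/ two_run_label i.+1 = two_run_label i + T,
      two_run_label i.+1 = two_run_label i + P |
      two_run_label i = two_run_label i.+1 + Q].
Proof.
move=> iN; rewrite /two_run_label /=.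
case: i iN => [|i] iN /=; first by apply: Or31; lia.
case: (leqP i.+2 a.+1) => [ia | ai].
  by rewrite ltnW //; apply: Or32; rewrite mulSn; lia.
apply: Or33; case: (leqP i.+1 a.+1) => [ia | _].
  have -> : i = a by lia.
  by rewrite addnC runs_meet /N -[b in b * Q](@prednK b) // mulSn; lia.
have -> : N - i.+1 = (N - i.+2).+1 by lia.
by rewrite mulSn addnC.
Qed.

Hypotheses (coprime_PQ : coprime P Q) (T_gt0 : 0 < T) (b_lt_P : b < P).

Lemma two_run_label_neq i j : i < j < N -> two_run_label i != two_run_label j.
Proof.
move=> /andP[ij jN]; rewrite /two_run_label.
have P_gt0 : 0 < P by lia.
have Q_gt0 : 0 < Q by case: Q runs_meet => [|//]; rewrite muln0; lia.
have -> : (j == 0) = false by lia.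
case: i ij => [|i] ij /=.
  by case: ifP => _; rewrite eq_sym ?addn_eq0 ?muln_eq0; lia.
case: ifP => ia; case: ifP => ja; try lia.
- by rewrite eqn_add2l eqn_pmul2r //; lia.
- apply/eqP => Lij.
  have runs_diff : (b - (N - j)) * Q = (a - i) * P.
    by rewrite mulnBl -runs_meet -Lij mulnBl; lia.
  have : P %| (b - (N - j)) * Q by rewrite runs_diff dvdn_mull.
  by rewrite Gauss_dvdl // => /dvdn_leq; lia.
- by rewrite eqn_pmul2r //; lia.
Qed.

Lemma two_run_label_inj i j : i < N -> j < N ->
  two_run_label i = two_run_label j -> i = j.
Proof.
move=> iN jN Lij; case: (ltngtP i j) => // [ij | ji].
- by have := @two_run_label_neq i j; rewrite ij jN Lij eqxx => /(_ isT).
- by have := @two_run_label_neq j i; rewrite ji iN Lij eqxx => /(_ isT).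
Qed.

End TwoRunLabelling.

Theorem mainTheorem15 : forall k : nat, 1 <= k ->
  exists N : nat, odd N /\ 3 <= N /\
    strict_prime_kth_power_distance_graph k (@cycle_adj N).
Proof.
move=> k k_gt0.
have cop35 : coprime (3 ^ k) (5 ^ k) by rewrite coprimeXl // coprimeXr.
have ndvd_3k_2k : ~~ (3 ^ k %| 2 ^ k).
  apply: contraTN isT => /(dvdn_trans (dvdn_exp k_gt0 (dvdnn 3))).
  by rewrite Euclid_dvdX.
have [a [b [/andP[b_gt0 b_lt] E]]] := coprime_shifted_multiple cop35
  (expn_gt0 3 k) (expn_gt0 5 k) ndvd_3k_2k (leq_exp2r 2 5 k_gt0).
have odd_ab : odd a = odd b.
  have := congr1 odd E; rewrite oddD !oddM !oddX /= (negbTE (lt0n_neq0 k_gt0)).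
  by rewrite !andbT addbF.
exists (a + b).+1; split; first by rewrite /= oddD odd_ab addbb.
split.
  by move: odd_ab b_gt0; case: a {E} => [|a]; case: b {b_lt} => [|[|b]] //=; lia.
have lab_inj := two_run_label_inj E b_gt0 cop35 (expn_gt0 2 k) b_lt.
apply: (cycle_prime_power_distance lab_inj); first exact: two_run_label_N.
move=> i iN; case: (two_run_label_step E b_gt0 iN) => step.
- by exists 2 => //; left.
- by exists 3 => //; left.
- by exists 5 => //; right.
Qed.
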